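(* In the joint communication and channel discrimination setting described in the context, let $\{\mathcal{C}_n\}_{n\in\mathbb{N}}$ be a sequence of codebooks (of codes with $P_{e,n}\to0$) that achieves the tuple $(R,E_0,E_1)\in\mathcal{R}$. Then there exists a sequence of constant composition codes that also achieves $(R,E_0,E_1)$.
   Context: Finite alphabets $\mathcal{X},\mathcal{Y},\mathcal{Z}$; memoryless channels $P_{Z^n|X^n}(z^n|x^n)=\prod_iP_{Z|X}(z_i|x_i)$ (communication) and $W_n(y^n|x^n)=\prod_iW(y_i|x_i)$, $V_n(y^n|x^n)=\prod_iV(y_i|x_i)$ (sensing under $\theta=0$, $\theta=1$), with $W(y|x)V(y|x)\ne0$; cost function $b:\mathcal{X}\to\mathbb{R}_+$ and budget $B\ge0$. An $(n,|\mathcal{M}_n|)$-code has message set $\mathcal{M}_n=\{1,\dots,|\mathcal{M}_n|\}$, encoder $f_n:\mathcal{M}_n\to\mathcal{X}^n$ with codewords satisfying $\frac1n\sum_ib(x_i)\le B$ (codebook $\mathcal{C}_n$), decoder $\varphi_n:\mathcal{Z}^n\to\mathcal{M}_n$, and discrimination function $\psi_n(y^n,x^n)\in\{0,1\}$. $P_{e,n}=\max_m\Pr[\varphi_n(Z^n)\ne m\mid M=m]$; $\varepsilon_{0,n}(x^n)=\sum_{y^n:\psi_n(y^n,x^n)=1}W_n(y^n|x^n)$, $\varepsilon_{1,n}(x^n)=\sum_{y^n:\psi_n(y^n,x^n)=0}V_n(y^n|x^n)$, $\varepsilon_{j,n}(\mathcal{C}_n)=\max_{x^n\in\mathcal{C}_n}\varepsilon_{j,n}(x^n)$,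 and it is required that $\max\{\varepsilon_{0,n}(\mathcal{C}_n),\varepsilon_{1,n}(\mathcal{C}_n)\}\le\tau$ for all $n$ for some constant $\tau<1$. A sequence of codes achieves $(R,E_0,E_1)$ if $P_{e,n}\to0$, $R=\liminf_n\frac1n\log|\mathcal{M}_n|$, $E_j=\liminf_n-\frac1n\log\varepsilon_{j,n}(\mathcal{C}_n)$; $\mathcal{R}$ is the closure of the set of achievable triples. A constant composition code is one in which all codewords have the same type (empirical distribution $\mathsf{P}_{x^n}(a)=\frac1n|\{i:x_i=a\}|$). *)

From HB Require Import structures.
From mathcomp Require Import all_boot all_order all_algebra.
From mathcomp Require Import all_classical all_reals all_analysis.
Set Implicit Arguments. Unset Strict Implicit. Unset Printing Implicit Defensive.
Import Order.TTheory GRing.Theory Num.Theory.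
Import numFieldNormedType.Exports.
Local Open Scope classical_set_scope.
Local Open Scope ring_scope.

Notation word A n := {ffun 'I_n -> A}.

(* Memoryless extension of a channel Q(y|x) (written Q x y). *)
Definition mless (R : pzRingType) (A B : finType) (Q : A -> B -> R) (n : nat)
  (x : word A n) (y : word B n) : R := \prod_(i < n) Q (x i) (y i).

Definition stochastic (R : numDomainType) (A B : finType) (Q : A -> B -> R) :=
  (forall a b, 0 <= Q a b) /\ (forall a, \sum_(b : B) Q a b = 1).

(* An (n, M)-code: message set 'I_M (i.e. {1,...,M}), M >= 1, encoder,
   decoder, and discrimination function psi(y^n, x^n) in {0,1}
   (true = decide theta = 1). *)
Record jcode (X Y Z : finType) (n : nat) := JCode {
  msize : nat;
  msize_gt0 : (0 < msize)%N;
  enc : 'I_msize -> word X n;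
  dec : word Z n -> 'I_msize;
  disc : word Y n -> word X n -> bool }.
Arguments msize {X Y Z n}.
Arguments enc {X Y Z n} _ _.
Arguments dec {X Y Z n} _ _.
Arguments disc {X Y Z n} _ _ _.

Section CodeDefs.
Variables (R : realType) (X Y Z : finType).

(* Cost constraint: (1/n) sum_i b(x_i) <= B, written as sum_i b(x_i) <= n B. *)
Definition cost_ok (b : X -> R) (B : R) n (c : jcode X Y Z n) :=
  forall m, \sum_(i < n) b (enc c m i) <= n%:R * B.

Definition Pe (PZ : X -> Z -> R) n (c : jcode X Y Z n) : R :=
  \big[Num.max/0]_(m : 'I_(msize c))
     \sum_(z : word Z n | dec c z != m) mless PZ (enc c m) z.

Definition eps0 (W : X -> Y -> R) n (c : jcode X Y Z n) (x : word X n) : R :=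
  \sum_(y : word Y n | disc c y x) mless W x y.
Definition eps1 (V : X -> Y -> R) n (c : jcode X Y Z n) (x : word X n) : R :=
  \sum_(y : word Y n | ~~ disc c y x) mless V x y.

Definition eps0C (W : X -> Y -> R) n (c : jcode X Y Z n) : R :=
  \big[Num.max/0]_(m : 'I_(msize c)) eps0 W c (enc c m).
Definition eps1C (V : X -> Y -> R) n (c : jcode X Y Z n) : R :=
  \big[Num.max/0]_(m : 'I_(msize c)) eps1 V c (enc c m).

Definition expo (e : R) (n : nat) : \bar R :=
  if e == 0 then +oo%E else EFin (- ln e / n%:R).

Definition achieves (PZ : X -> Z -> R) (W V : X -> Y -> R) (b : X -> R) (B : R)
  (C : forall n, jcode X Y Z n) (Rt E0 E1 : \bar R) : Prop :=
  [/\ forall n, cost_ok b B (C n),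
      (exists2 tau : R, tau < 1 & forall n, (0 < n)%N ->
          Num.max (eps0C W (C n)) (eps1C V (C n)) <= tau),
      (fun n => Pe PZ (C n)) @ \oo --> (0 : R) &
    [/\ Rt = limn_einf (fun n => EFin (ln (msize (C n))%:R / n%:R)),
      E0 = limn_einf (fun n => expo (eps0C W (C n)) n) &
      E1 = limn_einf (fun n => expo (eps1C V (C n)) n)]].

Definition ptype n (x : word X n) (a : X) : R :=
  #|[set i : 'I_n | x i == a]|%:R / n%:R.

Definition const_comp n (c : jcode X Y Z n) : Prop :=
  forall m m' : 'I_(msize c), ptype (enc c m) = ptype (enc c m').

End CodeDefs.
Arguments const_comp {R X Y Z n} c.

From HB Require Import structures.
From mathcomp Require Import all_boot all_order all_algebra.
From mathcomp Require Import all_classical all_reals all_analysis.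
From mathcomp Require Import ring lra zify.
Set Implicit Arguments. Unset Strict Implicit. Unset Printing Implicit Defensive.
Import Order.TTheory GRing.Theory Num.Theory.
Local Open Scope ring_scope.

(* Keep only the messages of the most frequent type.  There are at most
   (n + 1)^|X| types, so this costs at most |X| ln (n + 1) / n in rate; it
   cannot increase the decoding error, and it can only decrease every
   discrimination error.  The exponents must however be matched exactly, not
   just improved, so the test of one codeword is then made worse on purpose:
   along a subsequence on which the type-I exponent of C_n is close to its
   lower limit E0, its decision region for theta = 1 is enlarged until its
   type-I error is within a constant factor of eps0(C_n), and along a
   disjoint subsequence the same is done for type II.  Such a fine adjustment
   is possible because W and V have full support: changing one letter of y^n
   changes W_n(y^n | x^n) by a bounded factor, so walking letter by letter
   from a light word to a heavy one meets a word whose mass is within that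
   factor of any intermediate target. *)

(** * Regions of prescribed mass *)

Section NonnegSums.
Context {R : realType} {T : finType} (p : T -> R).
Hypothesis p_ge0 : forall y, 0 <= p y.

Lemma ler_psum_subset (P P' : pred T) :
  subpred P P' -> \sum_(y | P y) p y <= \sum_(y | P' y) p y.
Proof.
move=> PP'; rewrite big_mkcond [leRHS]big_mkcond /=.
by apply: ler_sum => y _; case: ifP => [/PP' ->|_] //; case: ifP.
Qed.

Lemma ler_psum_orb (P P' : pred T) :
  \sum_(y | P y || P' y) p y <= \sum_(y | P y) p y + \sum_(y | P' y) p y.
Proof.
rewrite (bigID P) /=; apply: lerD; apply: ler_psum_subset => y /andP[//].
by case/orP=> [->|].
Qed.

End NonnegSums.

Lemma bounded_growth_crossing {R : realType} (K t : R) (f : nat -> R) L :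
  0 < K -> f 0%N <= t < f L -> (forall j, (j < L)%N -> f j.+1 <= K * f j) ->
  exists j, t / K <= f j <= t.
Proof.
move=> K_gt0 /andP[f0 fL] f_growth.
suff /(_ L (leqnn L)) : forall m, (m <= L)%N -> (exists j, t / K <= f j <= t) \/ f m <= t.
  by case=> [//|]; rewrite leNgt fL.
elim=> [|m IH] lt_mL; first by right.
case: (IH (ltnW lt_mL)) => [|le_t]; first by left.
have [le_t'|lt_t'] := leP (f m.+1) t; first by right.
left; exists m; rewrite le_t andbT ler_pdivrMr // mulrC.
exact: ltW (lt_le_trans lt_t' (f_growth m lt_mL)).
Qed.

Lemma prefix_crossing {R : realType} {T : Type} (p : T -> R) (s : seq T) (t c : R) :
  c < t -> t <= c + \sum_(y <- s) p y -> (forall y, p y <= t) ->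
  exists k, t <= c + \sum_(y <- take k s) p y <= t + t.
Proof.
elim: s c => [|y s IH] c lt_ct; first by rewrite big_nil addr0 leNgt lt_ct.
rewrite big_cons addrA => le_t p_le.
have [le_t'|lt_t'] := leP t (c + p y).
  by exists 1%N; rewrite /= take0 big_seq1 le_t' lerD // ltW.
by have [k hk] := IH _ lt_t' le_t p_le; exists k.+1; rewrite /= big_cons addrA.
Qed.

Section EnlargePred.
Context {R : realType} {T : finType} (p : T -> R) (K : R).
Hypotheses (p_ge0 : forall y, 0 <= p y) (p_sum1 : \sum_y p y = 1) (K_ge1 : 1 <= K).
Hypothesis p_bridge : forall t y0 y1, p y0 <= t < p y1 -> exists y, t / K <= p y <= t.

Lemma enlarge_pred (S : pred T) (A : R) :
  (exists y0, S y0) -> 0 < A <= 1 -> \sum_(y | S y) p y <= A ->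
  exists2 S' : pred T, subpred S S' & A / (3 * K) <= \sum_(y | S' y) p y <= A.
Proof.
move=> [y0 Sy0] /andP[A_gt0 A_le1] le_A.
set a := \sum_(y | S y) p y.
have [le_a|lt_a] := leP (A / (3 * K)) a; first by exists S; rewrite ?le_a.
set t := A / 3.
have K_gt0 : 0 < K := lt_le_trans ltr01 K_ge1.
have t_gt0 : 0 < t by rewrite divr_gt0.
have tK : A / (3 * K) = t / K by rewrite invfM mulrA.
have le_tK_t : t / K <= t by rewrite ler_pdivrMr // ler_peMr // ltW.
have lt_a_t : a < t by rewrite (lt_le_trans lt_a) // tK.
have A3 : A = t + t + t by rewrite /t; field.
have a_ge0 : 0 <= a by exact: sumr_ge0.
(* Either some point is heavier than [t], and the bridge yields one point of
   mass in [[t / K, t]], or all points are light and a prefix of the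
   enumeration has mass in [[t, 2 t]]. *)
have [[y1 lt_t_y1]|small] := pselect (exists y1, t < p y1).
  have le_y0_t : p y0 <= t.
    by apply: le_trans (ltW lt_a_t); rewrite /a (bigD1 y0) //= lerDl sumr_ge0.
  have /p_bridge[y /andP[ge_y le_y]] : p y0 <= t < p y1 by rewrite le_y0_t.
  exists (fun z => S z || (z == y)) => [z /= ->//|].
  apply/andP; split.
    by rewrite tK (le_trans ge_y) // (bigD1 y) /= ?eqxx ?orbT // lerDl sumr_ge0.
  apply: le_trans (ler_psum_orb p_ge0 _ _) _; rewrite big_pred1_eq -/a; lra.
have le_t : forall y, p y <= t by move=> y; rewrite leNgt; apply/negP => ?; apply: small; exists y.
have [|k /andP[ge_k le_k]] := prefix_crossing (s := enum T) t_gt0 _ le_t.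
  by rewrite add0r big_enum /= p_sum1; lra.
have prefixE : \sum_(y <- take k (enum T)) p y = \sum_(y | y \in take k (enum T)) p y.
  by rewrite big_uniq // take_uniq // enum_uniq.
rewrite add0r prefixE in ge_k le_k.
exists (fun z => S z || (z \in take k (enum T))) => [z /= ->//|].
apply/andP; split.
  rewrite tK (le_trans le_tK_t) // (le_trans ge_k) //.
  by apply: ler_psum_subset => // z ->; rewrite orbT.
apply: le_trans (ler_psum_orb p_ge0 _ _) _; rewrite -/a; lra.
Qed.

End EnlargePred.

(** * Memoryless channels *)

Definition splice {Y : finType} {n} (y0 y1 : word Y n) (k : nat) : word Y n :=
  [ffun i : 'I_n => if (i < k)%N then y1 i else y0 i].

Section Memoryless.
Context {R : realType} {X Y : finType} (Q : X -> Y -> R).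

Definition ratio_bound : R :=
  \big[Num.max/1]_(a : X) \big[Num.max/1]_(y : Y) \big[Num.max/1]_(y' : Y) (Q a y / Q a y').

Lemma ratio_bound_ge1 : 1 <= ratio_bound.
Proof. exact: bigmax_ge_id. Qed.

Lemma ratio_bound_gt0 : 0 < ratio_bound.
Proof. exact: lt_le_trans ltr01 ratio_bound_ge1. Qed.

Lemma ratio_le_bound a y y' : Q a y / Q a y' <= ratio_bound.
Proof.
apply: le_trans (le_bigmax _ _ a); apply: le_trans (le_bigmax _ _ y).
exact: (le_bigmax _ (fun y' => Q a y / Q a y')).
Qed.

Hypothesis hQ : stochastic Q.

Lemma mless_ge0 n (x : word X n) y : 0 <= mless Q x y.
Proof. by apply: prodr_ge0 => i _; exact: hQ.1. Qed.

Lemma mless_sum1 n (x : word X n) : \sum_(y : word Y n) mless Q x y = 1.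
Proof.
rewrite /mless -(bigA_distr_bigA (fun (i : 'I_n) (b : Y) => Q (x i) b)) /=.
by apply: big1 => i _; exact: hQ.2.
Qed.

Lemma mless_psum_le1 n (x : word X n) (P : pred (word Y n)) :
  \sum_(y | P y) mless Q x y <= 1.
Proof.
by rewrite -(mless_sum1 x); apply: ler_psum_subset => // y; exact: mless_ge0.
Qed.

Lemma exists_of_mless_psum_lt1 n (x : word X n) (P : pred (word Y n)) :
  \sum_(y | ~~ P y) mless Q x y < 1 -> exists y, P y.
Proof.
apply: contraPP => noP; rewrite -(mless_sum1 x) (eq_bigl predT) ?ltxx //.
by move=> y; apply/negP => Py; apply: noP; exists y.
Qed.

Hypothesis Q_gt0 : forall a y, 0 < Q a y.

Lemma psum_mless_gt0 n (x : word X n) (P : pred (word Y n)) :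
  (exists y, P y) -> 0 < \sum_(y | P y) mless Q x y.
Proof.
move=> [y Py]; rewrite (bigD1 y) //= ltr_pwDl ?sumr_ge0 // => [|z _].
  by apply: prodr_gt0 => i _; exact: Q_gt0.
exact: mless_ge0.
Qed.

Lemma mless_change_letter n (x : word X n) (y y' : word Y n) (i : 'I_n) :
  (forall j, j != i -> y' j = y j) -> mless Q x y' <= ratio_bound * mless Q x y.
Proof.
move=> y'E; rewrite /mless (bigD1 i) // [X in _ <= _ * X](bigD1 i) // mulrA.
under eq_bigr => j /andP[_ /y'E ->] do [].
apply: ler_wpM2r; first by apply: prodr_ge0 => j _; exact: hQ.1.
by rewrite -ler_pdivrMr ?Q_gt0 ?ratio_le_bound.
Qed.

Lemma mless_bridge n (x : word X n) (t : R) (y0 y1 : word Y n) :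
  mless Q x y0 <= t < mless Q x y1 ->
  exists y, t / ratio_bound <= mless Q x y <= t.
Proof.
move=> cross; pose f k := mless Q x (splice y0 y1 k).
(* walking from [y0] to [y1] one letter at a time *)
have f_ends : f 0%N <= t < f n.
  have -> : f 0%N = mless Q x y0.
    by rewrite /f; congr mless; apply/ffunP => i; rewrite ffunE.
  have -> : f n = mless Q x y1.
    by rewrite /f; congr mless; apply/ffunP => i; rewrite ffunE ltn_ord.
  exact: cross.
have f_growth k : (k < n)%N -> f k.+1 <= ratio_bound * f k.
  move=> lt_kn; apply: (@mless_change_letter n x _ _ (Ordinal lt_kn)) => j neq_jk.
  rewrite !ffunE ltnS leq_eqVlt; suff /negbTE -> : nat_of_ord j != k by [].
  by apply: contra neq_jk => /eqP jk; apply/eqP/val_inj.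
have [j hj] := bounded_growth_crossing ratio_bound_gt0 f_ends f_growth.
by exists (splice y0 y1 j).
Qed.

End Memoryless.

Lemma eps0C_le1 {R : realType} {X Y Z : finType} {n} (W : X -> Y -> R) (c : jcode X Y Z n) :
  stochastic W -> eps0C W c <= 1.
Proof. by move=> hW; apply: bigmax_le => // m _; exact: mless_psum_le1. Qed.

Lemma eps1C_le1 {R : realType} {X Y Z : finType} {n} (V : X -> Y -> R) (c : jcode X Y Z n) :
  stochastic V -> eps1C V c <= 1.
Proof. by move=> hV; apply: bigmax_le => // m _; exact: mless_psum_le1. Qed.


(** * Subcodes *)

Section Restriction.
Context {R : realType} {X Y Z : finType} {n : nat} (c : jcode X Y Z n).
Variables (S : {set 'I_(msize c)}) (S_gt0 : (0 < #|S|)%N).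

(* outputs of the decoder outside [S] are mapped to an arbitrary index *)
Definition restrict_code : jcode X Y Z n :=
  @JCode X Y Z n #|S| S_gt0 (fun j => enc c (enum_val j))
    (fun z => enum_rank_in (enum_valP (Ordinal S_gt0)) (dec c z)) (disc c).

Lemma restrict_cost (b : X -> R) B : cost_ok b B c -> cost_ok b B restrict_code.
Proof. by move=> cost_c j; exact: cost_c. Qed.

Lemma restrict_Pe (PZ : X -> Z -> R) : stochastic PZ -> Pe PZ restrict_code <= Pe PZ c.
Proof.
move=> hPZ; apply: bigmax_le => [|j _]; first exact: bigmax_ge_id.
apply: le_trans (le_bigmax _ _ (enum_val j)).
apply: ler_psum_subset => [z|z]; first exact: mless_ge0.
by apply: contra => /eqP /= ->; rewrite enum_valK_in.
Qed.

Lemma restrict_eps0C (W : X -> Y -> R) : eps0C W restrict_code <= eps0C W c.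
Proof.
apply: bigmax_le => [|j _]; first exact: bigmax_ge_id.
exact: (le_bigmax _ (fun m => eps0 W c (enc c m))).
Qed.

Lemma restrict_eps1C (V : X -> Y -> R) : eps1C V restrict_code <= eps1C V c.
Proof.
apply: bigmax_le => [|j _]; first exact: bigmax_ge_id.
exact: (le_bigmax _ (fun m => eps1 V c (enc c m))).
Qed.

Lemma restrict_const_comp :
  {in S &, forall m m', ptype R (enc c m) = ptype R (enc c m')} ->
  const_comp (R := R) restrict_code.
Proof. by move=> same_type j j'; apply: same_type; exact: enum_valP. Qed.

End Restriction.

Lemma card_le_fibers (I T : finType) (f : I -> T) k :
  (forall t, #|[set i | f i == t]| <= k)%N -> (#|I| <= k * #|T|)%N.
Proof.
move=> fiber_le; rewrite -sum1_card (partition_big f predT) //= mulnC -sum_nat_const.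
by apply: leq_sum => t _; rewrite sum1_card -cardsE fiber_le.
Qed.

Section PopularType.
Context {R : realType} {X Y Z : finType} {n : nat} (c : jcode X Y Z n).

(* the classical-set comprehension is the one used in [ptype] *)
Definition type_counts (x : word X n) : {ffun X -> 'I_n.+1} :=
  [ffun a => inord #|[set i : 'I_n | x i == a]%classic|].

Lemma ptypeE (x : word X n) a : ptype R x a = (type_counts x a)%:R / n%:R.
Proof. by rewrite ffunE inordK // ltnS -[leqRHS]card_ord max_card. Qed.

Definition popular_type : {ffun X -> 'I_n.+1} :=
  [arg max_(t > type_counts (enc c (Ordinal (msize_gt0 c))))
     #|[set m | type_counts (enc c m) == t]|].

Definition popular_msgs : {set 'I_(msize c)} :=
  [set m | type_counts (enc c m) == popular_type].

Lemma popular_msgs_max t :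
  (#|[set m | type_counts (enc c m) == t]| <= #|popular_msgs|)%N.
Proof. by rewrite /popular_msgs /popular_type; case: arg_maxnP => // t' _; apply. Qed.

Lemma popular_msgs_gt0 : (0 < #|popular_msgs|)%N.
Proof.
apply: leq_trans (popular_msgs_max (type_counts (enc c (Ordinal (msize_gt0 c))))).
by apply/card_gt0P; exists (Ordinal (msize_gt0 c)); rewrite inE.
Qed.

Lemma msize_le_popular : (msize c <= #|popular_msgs| * n.+1 ^ #|X|)%N.
Proof.
rewrite -{1}(card_ord (msize c)) -(card_ord n.+1) -card_ffun.
exact: card_le_fibers popular_msgs_max.
Qed.

Lemma popular_msgs_same_type :
  {in popular_msgs &, forall m m', ptype R (enc c m) = ptype R (enc c m')}.
Proof.
move=> m m'; rewrite !inE => /eqP tm /eqP tm'.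
by apply/funext => a; rewrite !ptypeE tm tm'.
Qed.

Definition popular_subcode : jcode X Y Z n := restrict_code popular_msgs_gt0.

Lemma popular_subcode_const_comp : const_comp (R := R) popular_subcode.
Proof. exact: restrict_const_comp popular_msgs_same_type. Qed.

End PopularType.

Section Retest.
Context {R : realType} {X Y Z : finType} {n : nat} (c : jcode X Y Z n).
Variables (x0 : word X n) (D : pred (word Y n)).

Definition retest_code : jcode X Y Z n :=
  @JCode X Y Z n (msize c) (msize_gt0 c) (enc c) (dec c)
    (fun y x => if x == x0 then D y else disc c y x).

Lemma eps0_retest (W : X -> Y -> R) x :
  eps0 W retest_code x = if x == x0 then \sum_(y | D y) mless W x0 y else eps0 W c x.
Proof. by rewrite /eps0 /=; case: eqP => [->|]. Qed.

Lemma eps1_retest (V : X -> Y -> R) x :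
  eps1 V retest_code x = if x == x0 then \sum_(y | ~~ D y) mless V x0 y else eps1 V c x.
Proof. by rewrite /eps1 /=; case: eqP => [->|]. Qed.

Lemma retest_eps0C_le (W : X -> Y -> R) A :
  eps0C W c <= A -> \sum_(y | D y) mless W x0 y <= A -> eps0C W retest_code <= A.
Proof.
move=> le_cA le_DA; apply: bigmax_le => [|m _].
  exact: le_trans (bigmax_ge_id _ _ _ _) le_cA.
rewrite eps0_retest; case: eqP => // _; apply: le_trans le_cA.
exact: (le_bigmax _ (fun m => eps0 W c (enc c m))).
Qed.

Lemma retest_eps1C_le (V : X -> Y -> R) B :
  eps1C V c <= B -> \sum_(y | ~~ D y) mless V x0 y <= B -> eps1C V retest_code <= B.
Proof.
move=> le_cB le_DB; apply: bigmax_le => [|m _].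
  exact: le_trans (bigmax_ge_id _ _ _ _) le_cB.
rewrite eps1_retest; case: eqP => // _; apply: le_trans le_cB.
exact: (le_bigmax _ (fun m => eps1 V c (enc c m))).
Qed.

Lemma retest_eps0C_ge (W : X -> Y -> R) m :
  x0 = enc c m -> \sum_(y | D y) mless W x0 y <= eps0C W retest_code.
Proof.
move=> x0E; apply: le_trans (le_bigmax _ (fun m => eps0 W retest_code (enc c m)) m).
by rewrite eps0_retest -x0E eqxx.
Qed.

Lemma retest_eps1C_ge (V : X -> Y -> R) m :
  x0 = enc c m -> \sum_(y | ~~ D y) mless V x0 y <= eps1C V retest_code.
Proof.
move=> x0E; apply: le_trans (le_bigmax _ (fun m => eps1 V retest_code (enc c m)) m).
by rewrite eps1_retest -x0E eqxx.
Qed.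

End Retest.

Lemma enlarge_test_region {R : realType} {X Y : finType} (Q Q' : X -> Y -> R) n
    (x : word X n) (S : pred (word Y n)) (A B : R) :
  stochastic Q -> stochastic Q' -> (forall a y, 0 < Q a y) ->
  A <= 1 -> B < 1 ->
  \sum_(y | S y) mless Q x y <= A -> \sum_(y | ~~ S y) mless Q' x y <= B ->
  exists2 D : pred (word Y n), \sum_(y | ~~ D y) mless Q' x y <= B &
    A / (3 * ratio_bound Q) <= \sum_(y | D y) mless Q x y <= A.
Proof.
move=> hQ hQ' Q_gt0 A_le1 B_lt1 le_SA le_SB.
have exS := exists_of_mless_psum_lt1 hQ' (le_lt_trans le_SB B_lt1).
have A_gt0 := lt_le_trans (psum_mless_gt0 hQ Q_gt0 x exS) le_SA.
have [|D subSD hD] := enlarge_pred (mless_ge0 hQ x) (mless_sum1 hQ x)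
  (ratio_bound_ge1 Q) (mless_bridge hQ Q_gt0 (x := x)) exS _ le_SA.
  by rewrite A_gt0.
exists D => //; apply: le_trans le_SB; apply: ler_psum_subset => [y|y].
  exact: mless_ge0.
by apply: contra; exact: subSD.
Qed.


Section TestedSubcode.
Context {R : realType} {X Y Z : finType} {n : nat} (c : jcode X Y Z n).

Let x0 := enc (popular_subcode c) (Ordinal (msize_gt0 (popular_subcode c))).

Definition tested_subcode (D : pred (word Y n)) : jcode X Y Z n :=
  retest_code (popular_subcode c) x0 D.

Variable D : pred (word Y n).

Lemma tested_subcode_const_comp : const_comp (R := R) (tested_subcode D).
Proof. exact: popular_subcode_const_comp. Qed.

Lemma tested_subcode_cost (b : X -> R) B : cost_ok b B c -> cost_ok b B (tested_subcode D).
Proof. exact: restrict_cost. Qed.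

Lemma tested_subcode_Pe (PZ : X -> Z -> R) :
  stochastic PZ -> Pe PZ (tested_subcode D) <= Pe PZ c.
Proof. exact: restrict_Pe. Qed.

Lemma test_region_eps0 (W : X -> Y -> R) :
  \sum_(y | disc c y x0) mless W x0 y <= eps0C W c.
Proof.
apply: le_trans (restrict_eps0C (popular_msgs_gt0 c) W).
exact: (le_bigmax _ (fun m => eps0 W (popular_subcode c) (enc (popular_subcode c) m))).
Qed.

Lemma test_region_eps1 (V : X -> Y -> R) :
  \sum_(y | ~~ disc c y x0) mless V x0 y <= eps1C V c.
Proof.
apply: le_trans (restrict_eps1C (popular_msgs_gt0 c) V).
exact: (le_bigmax _ (fun m => eps1 V (popular_subcode c) (enc (popular_subcode c) m))).
Qed.

Lemma tested_subcode_eps0C (W : X -> Y -> R) :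
  \sum_(y | D y) mless W x0 y <= eps0C W c ->
  \sum_(y | D y) mless W x0 y <= eps0C W (tested_subcode D) <= eps0C W c.
Proof.
move=> le_D; rewrite (retest_eps0C_ge _ _ (erefl x0)).
by rewrite retest_eps0C_le // restrict_eps0C.
Qed.

Lemma tested_subcode_eps1C (V : X -> Y -> R) :
  \sum_(y | ~~ D y) mless V x0 y <= eps1C V c ->
  \sum_(y | ~~ D y) mless V x0 y <= eps1C V (tested_subcode D) <= eps1C V c.
Proof.
move=> le_D; rewrite (retest_eps1C_ge _ _ (erefl x0)).
by rewrite retest_eps1C_le // restrict_eps1C.
Qed.

End TestedSubcode.

Section DegradedSubcode.
Context {R : realType} {X Y Z : finType} (W V : X -> Y -> R).
Hypotheses (hW : stochastic W) (hV : stochastic V).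
Hypotheses (W_gt0 : forall a y, 0 < W a y) (V_gt0 : forall a y, 0 < V a y).

Lemma degrade_test_region n (x : word X n) (S : pred (word Y n)) (A B : R) (b0 b1 : bool) :
  ~~ (b0 && b1) -> A <= 1 -> B <= 1 -> (b0 -> B < 1) -> (b1 -> A < 1) ->
  \sum_(y | S y) mless W x y <= A -> \sum_(y | ~~ S y) mless V x y <= B ->
  exists D : pred (word Y n),
    [/\ \sum_(y | D y) mless W x y <= A, \sum_(y | ~~ D y) mless V x y <= B,
        b0 -> A / (3 * ratio_bound W) <= \sum_(y | D y) mless W x y &
        b1 -> B / (3 * ratio_bound V) <= \sum_(y | ~~ D y) mless V x y].
Proof.
move=> not_both A_le1 B_le1 b0_B b1_A le_SA le_SB.
case: b0 not_both b0_B => [/= nb1 /(_ isT) B_lt1 | _ _].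
  have [D le_DB /andP[ge_DA le_DA]] := enlarge_test_region hW hV W_gt0 A_le1 B_lt1 le_SA le_SB.
  by exists D; split => // /idPn; rewrite nb1.
case: b1 b1_A => [/(_ isT) A_lt1 | _]; last by exists S.
have le_SA' : \sum_(y | ~~ ~~ S y) mless W x y <= A by under eq_bigl do rewrite negbK.
have [D le_DA /andP[ge_DB le_DB]] := enlarge_test_region hV hW V_gt0 B_le1 A_lt1 le_SB le_SA'.
exists (fun y => ~~ D y); under [\sum_(y | ~~ ~~ D y) _]eq_bigl do rewrite negbK.
by split.
Qed.

Lemma tested_subcode_exists n (c : jcode X Y Z n) (b0 b1 : bool) :
  ~~ (b0 && b1) -> (b0 || b1 -> Num.max (eps0C W c) (eps1C V c) < 1) ->
  exists D : pred (word Y n),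
    [/\ eps0C W (tested_subcode c D) <= eps0C W c,
        eps1C V (tested_subcode c D) <= eps1C V c,
        Num.max (eps0C W c) (eps1C V c) < 1 ->
          0 < eps0C W (tested_subcode c D) /\ 0 < eps1C V (tested_subcode c D),
        b0 -> eps0C W c / (3 * ratio_bound W) <= eps0C W (tested_subcode c D) &
        b1 -> eps1C V c / (3 * ratio_bound V) <= eps1C V (tested_subcode c D)].
Proof.
move=> not_both lt1.
have [||D [le_DA le_DB ge_DA ge_DB]] := degrade_test_region not_both
  (eps0C_le1 c hW) (eps1C_le1 c hV) _ _ (test_region_eps0 c W) (test_region_eps1 c V).
- move=> b0T; have /lt1 : b0 || b1 by rewrite b0T.
  by rewrite gt_max => /andP[].
- move=> b1T; have /lt1 : b0 || b1 by rewrite b1T orbT.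
  by rewrite gt_max => /andP[].
exists D; have /andP[lo0 hi0] := tested_subcode_eps0C le_DA.
have /andP[lo1 hi1] := tested_subcode_eps1C le_DB.
split => // [|/ge_DA/le_trans-> // | /ge_DB/le_trans-> //].
rewrite gt_max => /andP[lt0 lt1']; split.
  apply: lt_le_trans lo0; apply: (psum_mless_gt0 hW W_gt0).
  by apply: (exists_of_mless_psum_lt1 hV); exact: le_lt_trans le_DB lt1'.
apply: lt_le_trans lo1; apply: (psum_mless_gt0 hV V_gt0).
apply: (exists_of_mless_psum_lt1 hW); under eq_bigl do rewrite negbK.
exact: le_lt_trans le_DA lt0.
Qed.

End DegradedSubcode.


(** * Lower limits, rates and exponents *)

Lemma natr_eventually_ge {R : realType} (B : R) :
  exists N, forall n, (N <= n)%N -> B <= n%:R.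
Proof.
exists (Num.truncn B).+1 => n le_n; apply: ltW (lt_le_trans (truncnS_gt B) _).
by rewrite ler_nat.
Qed.

Section Liminf.
Context {R : realType}.
Local Open Scope ereal_scope.
Implicit Types (u v : (\bar R)^nat) (l : \bar R).

Definition frequently_le u l (P : pred nat) :=
  forall e : R, (0 < e)%R -> forall N, exists n, [/\ (N <= n)%N, P n & u n <= l + e%:E].

Lemma lee_limn_einf u v N :
  (forall n, (N <= n)%N -> u n <= v n) -> limn_einf u <= limn_einf v.
Proof.
move=> le_uv; rewrite !limn_einf_lim.
apply: lee_lim; [exact: is_cvg_einfs | exact: is_cvg_einfs |].
exists N => // m le_Nm /=; apply: le_ereal_inf_tmp => _ [k /= le_mk <-].
apply: le_trans (le_uv k (leq_trans le_Nm le_mk)).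
by apply: ereal_inf_lbound; exists k.
Qed.

Lemma limn_einf_ge0 u : (forall n, 0 <= u n) -> 0 <= limn_einf u.
Proof.
move=> u_ge0; rewrite limn_einf_lim; apply: lime_ge; first exact: is_cvg_einfs.
by apply: nearW => n; apply: le_ereal_inf_tmp => _ [k _ <-].
Qed.

Lemma lee_limn_einf_approx u v :
  (forall e : R, (0 < e)%R -> exists N, forall n, (N <= n)%N -> u n <= v n + e%:E) ->
  limn_einf u <= limn_einf v.
Proof.
move=> approx; apply/lee_addgt0Pr => e e_gt0; have [N le_uv] := approx e e_gt0.
apply: le_trans (lee_limn_einf le_uv) _.
rewrite (_ : (fun n => v n + e%:E) = (fun n => e%:E + v n)); last first.
  by apply/funext => n; rewrite addeC.
by rewrite limn_einf_shift // addeC.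
Qed.

Lemma limn_einf_le_frequently u l P : frequently_le u l P -> limn_einf u <= l.
Proof.
move=> freq; apply/lee_addgt0Pr => e e_gt0; rewrite limn_einf_lim.
apply: lime_le; first exact: is_cvg_einfs.
exists 0%N => // N _ /=; have [n [le_Nn _ le_u]] := freq e e_gt0 N.
by apply: le_trans le_u; apply: ereal_inf_lbound; exists n.
Qed.

Lemma frequently_le_limn_einf u :
  limn_einf u != -oo -> frequently_le u (limn_einf u) predT.
Proof.
move=> + e e_gt0 N; case lim_u: (limn_einf u) => [l| |] // _; last first.
  by exists N; rewrite leqnn addye ?leey.
have : einfs u N < (l + e)%:E.
  apply: le_lt_trans (_ : einfs u N <= limn_einf u) _; last first.
    by rewrite lim_u lte_fin ltrDl.
  rewrite limn_einf_lim (cvg_lim _ (@cvg_einfs_sup _ u)) //.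
  by apply: ereal_sup_ubound; exists N.
by move=> /ereal_inf_lt [_ [n /= le_Nn <-]] lt_u; exists n; split => //; exact: ltW.
Qed.

Lemma split_frequently_le u v l l' :
  frequently_le u l predT -> frequently_le v l' predT ->
  exists N0 N1 : pred nat, [/\ forall n, ~~ (N0 n && N1 n),
    forall n, N0 n || N1 n -> (0 < n)%N,
    frequently_le u l N0 & frequently_le v l' N1].
Proof.
move=> freq_u freq_v; pose tol k : R := (k.+1%:R)^-1%R.
have tol_gt0 k : (0 < tol k)%R by rewrite invr_gt0 ltr0n.
have next w l'' : frequently_le w l'' predT -> {g : nat * nat -> nat &
    forall kN, (kN.2 < g kN)%N /\ w (g kN) <= l'' + (tol kN.1)%:E}.
  move=> freq_w.
  apply: (@boolp.choice _ _ (fun kN n => (kN.2 < n)%N /\ w n <= l'' + (tol kN.1)%:E)).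
  move=> [k N]; have [n [lt_Nn _ le_w]] := freq_w _ (tol_gt0 k) N.+1.
  by exists n.
have [gu hgu] := next u l freq_u; have [gv hgv] := next v l' freq_v.
(* [s k.+1] lies beyond [s k] and is [tol k]-close to [l] (for [u], k even)
   or to [l'] (for [v], k odd) *)
pose s := fix s k := if k is j.+1 then (if odd j then gv (j, s j) else gu (j, s j)) else 0%N.
have s_lt k : (s k < s k.+1)%N.
  by rewrite /=; case: ifP => _; [exact: (hgv _).1 | exact: (hgu _).1].
have s_inj := incn_inj (leq_mono (homo_ltn ltn_trans s_lt)).
have s_ge k : (k <= s k)%N by elim: k => // k IH; exact: leq_ltn_trans IH (s_lt k).
have often (b : bool) (e : R) N : (0 < e)%R ->
    exists k, [/\ odd k = b, (N <= s k.+1)%N & (tol k <= e)%R].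
  move=> e_gt0; have [M le_M] := natr_eventually_ge e^-1.
  exists ((M + N).*2 + b)%N; split; first by rewrite oddD odd_double; case: b.
    by apply: leq_trans (ltnW (s_lt _)); apply: leq_trans (s_ge _); lia.
  by rewrite /tol invf_ple ?posrE // le_M //; lia.
pose N_ (b : bool) n := [exists k : 'I_n, (odd k == b) && (s k.+1 == n)].
have N_s b k : odd k = b -> N_ b (s k.+1).
  move=> ok; apply/existsP; exists (Ordinal (leq_ltn_trans (s_ge k) (s_lt k))).
  by rewrite /= ok !eqxx.
exists (N_ false), (N_ true); split.
- move=> n; apply/andP => -[/existsP[k /andP[/eqP ok /eqP sk]] /existsP[j /andP[/eqP oj /eqP sj]]].
  by have [kj] := s_inj _ _ (etrans sk (esym sj)); move: ok; rewrite kj oj.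
- by move=> n /orP[] /existsP[k /andP[_ /eqP <-]]; exact: leq_ltn_trans (leq0n _) (s_lt k).
- move=> e e_gt0 N; have [k [ok le_N le_tol]] := often false e N e_gt0.
  exists (s k.+1); split; [by [] | exact: N_s |].
  rewrite /= ok; apply: le_trans (hgu (k, s k)).2 _.
  by apply: leeD => //; rewrite lee_fin.
- move=> e e_gt0 N; have [k [ok le_N le_tol]] := often true e N e_gt0.
  exists (s k.+1); split; [by [] | exact: N_s |].
  rewrite /= ok; apply: le_trans (hgv (k, s k)).2 _.
  by apply: leeD => //; rewrite lee_fin.
Qed.

End Liminf.

Section Rate.
Context {R : realType}.

Lemma ln_div_eventually_le (k e : R) : 0 <= k -> 0 < e ->
  exists N, forall n, (N <= n)%N -> k * ln n.+1%:R / n%:R <= e.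
Proof.
move=> k_ge0 e_gt0; pose K := 4 * k / e + 1.
have K_ge1 : 1 <= K by rewrite lerDr divr_ge0 ?mulr_ge0 // ltW.
have K_gt0 : 0 < K := lt_le_trans ltr01 K_ge1.
have [N le_N] := natr_eventually_ge (2 * k * ln K / e).
exists (maxn N 1) => n; rewrite geq_max => /andP[/le_N le_n n_ge1].
have n_gt0 : 0 < n%:R :> R by rewrite ltr0n.
have le_ln : ln n.+1%:R <= ln K + (n%:R + 1) / K.
  (* [ln x < x] at [x = (n + 1) / K] *)
  have nK_gt0 : 0 < n.+1%:R / K by rewrite divr_gt0.
  rewrite -[ln n.+1%:R](subrK (ln K)) addrC -ln_div ?posrE // lerD2l -natr1.
  by rewrite ltW // ln_sublinear // natr1.
rewrite ler_pdivrMr //; apply: le_trans (ler_wpM2l k_ge0 le_ln) _.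
have le_lnK : 2 * k * ln K <= e * n%:R by rewrite -ler_pdivrMl // mulrC.
have le_rest : k * ((n%:R + 1) / K) <= e * n%:R / 2.
  rewrite mulrA ler_pdivrMr // /K.
  have -> : e * n%:R / 2 * (4 * k / e + 1) = 2 * k * n%:R + e * n%:R / 2.
    by field; rewrite gt_eqF.
  have : 1 <= n%:R :> R by rewrite ler1n.
  nra.
nra.
Qed.

Local Open Scope ereal_scope.

Lemma limn_einf_log_rate (M M' : nat -> nat) (k : nat) :
  (forall n, 0 < M' n)%N -> (forall n, M' n <= M n <= M' n * n.+1 ^ k)%N ->
  limn_einf (fun n => (ln (M' n)%:R / n%:R : R)%R%:E) =
  limn_einf (fun n => (ln (M n)%:R / n%:R : R)%R%:E).
Proof.
move=> M'_gt0 le_M; apply/eqP; rewrite eq_le; apply/andP; split.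
  apply: (@lee_limn_einf _ _ _ 0) => n _; rewrite lee_fin ler_wpM2r ?invr_ge0 //.
  have /andP[le_M'M _] := le_M n.
  by rewrite ler_ln ?posrE ?ltr0n ?ler_nat // (leq_trans (M'_gt0 n)).
apply: lee_limn_einf_approx => e e_gt0.
have [N le_e] := ln_div_eventually_le (ler0n _ k) e_gt0.
exists (maxn N 1) => n; rewrite geq_max => /andP[/le_e le_ke n_gt0].
have /andP[le_M'M le_MM'] := le_M n.
have le_ln : (ln (M n)%:R <= ln (M' n)%:R + k%:R * ln n.+1%:R :> R)%R.
  have M_gt0 : (0 < (M n)%:R :> R)%R by rewrite ltr0n (leq_trans (M'_gt0 n)).
  have pow_gt0 : (0 < n.+1%:R ^+ k :> R)%R by rewrite exprn_gt0.
  rewrite mulr_natl -lnXn // -lnM ?posrE ?ltr0n // ler_ln ?posrE ?mulr_gt0 ?ltr0n //.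
  by rewrite -natrX -natrM ler_nat.
  exact: leq_trans (M'_gt0 n) le_M'M.
apply: (@le_trans _ _ ((ln (M' n)%:R / n%:R + e)%R%:E)); last exact: lexx.
rewrite lee_fin.
apply: le_trans (_ : _ <= (ln (M' n)%:R + k%:R * ln n.+1%:R) / n%:R)%R _.
  by rewrite ler_wpM2r ?invr_ge0.
by rewrite mulrDl lerD2l -mulrA mulrA.
Qed.

End Rate.

Section Exponent.
Context {R : realType}.
Local Open Scope ereal_scope.

Lemma expoE (a : R) n : (0 < a)%R -> expo a n = (- ln a / n%:R)%:E.
Proof. by move=> a_gt0; rewrite /expo gt_eqF. Qed.

Lemma expo_ge0 (a : R) n : (a <= 1)%R -> 0 <= expo a n.
Proof.
move=> a_le1; rewrite /expo; case: ifP => // _; rewrite lee_fin.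
by rewrite mulr_ge0 ?invr_ge0 // oppr_ge0 ln_le0.
Qed.

Lemma le_expo (a a' : R) n : (0 < a' <= a)%R -> expo a n <= expo a' n.
Proof.
move=> /andP[a'_gt0 le_a'a]; have a_gt0 := lt_le_trans a'_gt0 le_a'a.
rewrite !expoE // lee_fin ler_wpM2r ?invr_ge0 // lerN2.
by rewrite ler_ln ?posrE.
Qed.

Lemma expo_le_shift (a a' K : R) n : (0 < a)%R -> (0 < K)%R -> (a / K <= a')%R ->
  expo a' n <= expo a n + (ln K / n%:R)%:E.
Proof.
move=> a_gt0 K_gt0 le_aK; have aK_gt0 : (0 < a / K)%R by rewrite divr_gt0.
have a'_gt0 := lt_le_trans aK_gt0 le_aK.
rewrite !expoE // -EFinD lee_fin -mulrDl ler_wpM2r ?invr_ge0 //.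
have : (ln (a / K) <= ln a')%R by rewrite ler_ln.
by rewrite ln_div ?posrE //; lra.
Qed.

Lemma limn_einf_expo_matched (a a' : nat -> R) (K : R) (N0 : pred nat) :
  (0 < K)%R -> (forall n, (0 < n)%N -> (0 < a' n <= a n)%R) ->
  (forall n, N0 n -> (a n / K <= a' n)%R) ->
  frequently_le (fun n => expo (a n) n) (limn_einf (fun n => expo (a n) n)) N0 ->
  limn_einf (fun n => expo (a' n) n) = limn_einf (fun n => expo (a n) n).
Proof.
move=> K_gt0 a'_pos a'_ge freq; apply/eqP; rewrite eq_le; apply/andP; split.
  apply: (@limn_einf_le_frequently _ _ _ predT) => e e_gt0 N.
  have [M le_M] := natr_eventually_ge (2 * ln K / e).
  have e2_gt0 : (0 < e / 2)%R by rewrite divr_gt0.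
  have [n [le_n N0n le_a]] := freq _ e2_gt0 (maxn N (maxn M 1)).
  move: le_n; rewrite !geq_max => /and3P[le_Nn /le_M le_Mn n_gt0].
  have /andP[a'_gt0 le_a'] := a'_pos n n_gt0.
  exists n; split => //.
  apply: le_trans (expo_le_shift n (lt_le_trans a'_gt0 le_a') K_gt0 (a'_ge n N0n)) _.
  apply: le_trans (leeD le_a (lexx _)) _.
  rewrite -addeA -EFinD leeD // lee_fin.
  have n_gt0' : (0 < n%:R :> R)%R by rewrite ltr0n.
  have : (ln K / n%:R <= e / 2)%R.
    by move: le_Mn; rewrite !ler_pdivrMr //; lra.
  lra.
apply: (@lee_limn_einf _ _ _ 1) => n /a'_pos; exact: le_expo.
Qed.

Lemma limn_einf_expo_neqNy (a : nat -> R) :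
  (forall n, (a n <= 1)%R) -> limn_einf (fun n => expo (a n) n) != -oo.
Proof.
move=> a_le1; rewrite gt_eqF // (lt_le_trans ltNy0) // limn_einf_ge0 // => n.
exact: expo_ge0.
Qed.

End Exponent.

Lemma full_support {R : realType} {X Y : finType} (W V : X -> Y -> R) :
  stochastic W -> stochastic V -> (forall a y, W a y * V a y != 0) ->
  (forall a y, 0 < W a y) /\ (forall a y, 0 < V a y).
Proof.
move=> hW hV WV_neq0; split=> a y; rewrite lt0r ?hW.1 ?hV.1 andbT;
  by apply: contraNneq (WV_neq0 a y) => ->; rewrite ?mul0r ?mulr0.
Qed.

Theorem lemma2 (R : realType) (X Y Z : finType)
  (PZ : X -> Z -> R) (W V : X -> Y -> R) (b : X -> R) (B : R)
  (hPZ : stochastic PZ) (hW : stochastic W) (hV : stochastic V)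
  (hWV : forall x y, W x y * V x y != 0)
  (hb : forall x, 0 <= b x) (hB : 0 <= B)
  (Rt E0 E1 : \bar R) (C : forall n, jcode X Y Z n) :
  achieves PZ W V b B C Rt E0 E1 ->
  exists C' : forall n, jcode X Y Z n,
    achieves PZ W V b B C' Rt E0 E1 /\ (forall n, const_comp (R:=R) (C' n)).
Proof.
move=> [cost_C [tau tau_lt1 le_tau] Pe_C [Rt_C E0_C E1_C]].
have [W_gt0 V_gt0] := full_support hW hV hWV.
have [N0 [N1 [N01 N_gt0 freq0 freq1]]] := split_frequently_le
  (frequently_le_limn_einf (limn_einf_expo_neqNy (fun n => eps0C_le1 (C n) hW)))
  (frequently_le_limn_einf (limn_einf_expo_neqNy (fun n => eps1C_le1 (C n) hV))).
have lt1 n : (0 < n)%N -> Num.max (eps0C W (C n)) (eps1C V (C n)) < 1.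
  by move=> /le_tau /le_lt_trans; apply.
have exD n := tested_subcode_exists hW hV W_gt0 V_gt0 (c := C n) (N01 n)
  (fun h => lt1 n (N_gt0 n h)).
pose C' n := tested_subcode (C n) (sval (cid (exD n))).
have hC' n := svalP (cid (exD n)).
exists C'; split => [|n]; last exact: tested_subcode_const_comp.
split.
- by move=> n; exact: tested_subcode_cost.
- exists tau => // n n_gt0; apply: le_trans (le_tau n n_gt0).
  by case: (hC' n) => le0 le1 _ _ _; exact: le_max2.
- apply: (@squeeze_cvgr _ _ _ _ (fun=> 0) (fun n => Pe PZ (C n))); last exact: Pe_C.
    apply: nearW => n; apply/andP; split; [exact: bigmax_ge_id | exact: tested_subcode_Pe].
  exact: (@cvg_cst R^o 0 nat _ _).
split.
- rewrite Rt_C; symmetry; apply: (@limn_einf_log_rate _ _ _ #|X|) => n.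
    exact: popular_msgs_gt0.
  by rewrite msize_le_popular -[leqRHS]card_ord max_card.
- rewrite E0_C; symmetry; apply: (limn_einf_expo_matched (K := 3 * ratio_bound W) _ _ _ freq0).
  + by rewrite mulr_gt0 ?ratio_bound_gt0.
  + by move=> n /lt1; case: (hC' n) => le0 _ pos _ _ /pos[-> _].
  + by move=> n; case: (hC' n).
- rewrite E1_C; symmetry; apply: (limn_einf_expo_matched (K := 3 * ratio_bound V) _ _ _ freq1).
  + by rewrite mulr_gt0 ?ratio_bound_gt0.
  + by move=> n /lt1; case: (hC' n) => _ le1 pos _ _ /pos[_ ->].
  + by move=> n; case: (hC' n).
Qed.
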